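(* Let $\mathbf{T},\hat{\mathbf{T}}\in\mathbb{R}^{N\times N}$ be symmetric (the true and perturbed covariance wavelet operators), let $h_0,\dots,h_{J-1}$ be wavelet functions, let $\Delta\ge0$ satisfy $\|\mathbf{H}_j(\hat{\mathbf{T}})-\mathbf{H}_j(\mathbf{T})\|\le\Delta$ for all $j$, and let $B>0$ satisfy $\|\mathbf{H}_j(\mathbf{T})\|\le B$ and $\|\mathbf{H}_j(\hat{\mathbf{T}})\|\le B$ for all $j$. Let $\mathbf{x}_{(j_\ell,\dots,j_1)}$ and $\hat{\mathbf{x}}_{(j_\ell,\dots,j_1)}$ be the scattering features of $\mathbf{x}\in\mathbb{R}^N$ computed on $\mathbf{T}$ and $\hat{\mathbf{T}}$ respectively. Then for every $\ell\ge1$ and every tuple $(j_\ell,\dots,j_1)\in\{0,\dots,J-1\}^\ell$, $$\|\hat{\mathbf{x}}_{(j_\ell,\dots,j_1)}-\mathbf{x}_{(j_\ell,\dots,j_1)}\|\le\ell\,\Delta\,B^{\ell-1}\|\mathbf{x}\|.$$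
   Context: For a symmetric $\mathbf{M}=\mathbf{V}\boldsymbol\Lambda\mathbf{V}^\top$ with eigenvalues $\lambda_1,\dots,\lambda_N$, $\mathbf{H}_j(\mathbf{M})=\mathbf{V}\operatorname{diag}(h_j(\lambda_1),\dots,h_j(\lambda_N))\mathbf{V}^\top$. The nonlinearity $\rho:\mathbb{R}\to\mathbb{R}$ acts entrywise and is non-expansive: $|\rho(a)-\rho(b)|\le|a-b|$ and $\rho(0)=0$ (e.g. $\rho=|\cdot|$). Scattering features on $\mathbf{M}$: $\mathbf{x}_{()}=\mathbf{x}$ and $\mathbf{x}_{(j_\ell,\dots,j_1)}=\rho(\mathbf{H}_{j_\ell}(\mathbf{M})\mathbf{x}_{(j_{\ell-1},\dots,j_1)})$. Norms are Euclidean for vectors and spectral for matrices. *)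

From HB Require Import structures.
From mathcomp Require Import all_boot all_order all_algebra.
From mathcomp Require Import boolp classical_sets reals.
Set Implicit Arguments. Unset Strict Implicit. Unset Printing Implicit Defensive.
Import Order.TTheory GRing.Theory Num.Theory.
Local Open Scope ring_scope.
Local Open Scope classical_set_scope.

Definition vnorm (R : realType) (N : nat) (v : 'cV[R]_N) : R :=
  Num.sqrt (\sum_(i < N) v i 0 ^+ 2).

Definition specnorm (R : realType) (N : nat) (A : 'M[R]_N) : R :=
  sup [set vnorm (A *m v) | v in [set v : 'cV[R]_N | vnorm v <= 1]].

(* Spectral functional calculus: given a decomposition M = V diag(lam) V^T
   with V orthogonal, h(M) = V diag(h(lam_1),...,h(lam_N)) V^T. *)
Definition spec_fun (R : realType) (N : nat) (V : 'M[R]_N) (lam : 'rV[R]_N)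
  (h : R -> R) : 'M[R]_N :=
  V *m diag_mx (map_mx h lam) *m V^T.

(* Scattering feature along a path js = [:: j_l; ...; j_1] (head = last applied). *)
Fixpoint scat (R : realType) (N J : nat) (H : 'I_J -> 'M[R]_N) (rho : R -> R)
  (x : 'cV[R]_N) (js : seq 'I_J) : 'cV[R]_N :=
  match js with
  | [::] => x
  | j :: js' => map_mx rho (H j *m scat H rho x js')
  end.

(* rho is 1-Lipschitz and ||A v|| <= ||A|| ||v||; writing
   Hh u' - H u = Hh (u' - u) + (Hh - H) u, one layer therefore maps an input
   error e on an input of size s to an output error at most B e + Delta s.
   The unperturbed features along a path of length l have size at most
   B^l ||x||, so e_(l+1) <= B e_l + Delta B^l ||x|| with e_0 = 0, which gives
   e_l <= l Delta B^(l-1) ||x||. *)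
From HB Require Import structures.
From mathcomp Require Import all_boot all_order all_algebra.
From mathcomp Require Import classical_sets reals.
From mathcomp Require Import ring lra.
Set Implicit Arguments. Unset Strict Implicit. Unset Printing Implicit Defensive.
Import Order.TTheory GRing.Theory Num.Theory.
Local Open Scope ring_scope.

Lemma mulr_natl_exprpred (R : comPzSemiRingType) (B : R) (l : nat) :
  B * (l%:R * B ^+ l.-1) = l%:R * B ^+ l.
Proof. by case: l => [|l]; rewrite ?mul0r ?mulr0 // exprS mulrCA. Qed.

Section EuclideanNorm.
Variables (R : realType) (n : nat).
Implicit Types (u v w : 'cV[R]_n) (F G : 'I_n -> R).

Lemma sumr_sqr_ge0 F : 0 <= \sum_i F i ^+ 2.
Proof. by apply: sumr_ge0 => i _; exact: sqr_ge0. Qed.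

Lemma sumr_sqr_eq0 F : \sum_i F i ^+ 2 = 0 -> forall i, F i = 0.
Proof.
move=> F0 i; apply/eqP; rewrite -sqrf_eq0; apply/eqP.
by apply: (psumr_eq0P (P := predT) (F := fun i => F i ^+ 2)) => // j _; exact: sqr_ge0.
Qed.

Lemma cauchy_schwarz_sum F G :
  (\sum_i F i * G i) ^+ 2 <= (\sum_i F i ^+ 2) * (\sum_i G i ^+ 2).
Proof.
set A := \sum_i F i ^+ 2; set C := \sum_i F i * G i.
have [A0 | A_neq0] := eqVneq A 0.
  have -> : C = 0 by rewrite /C big1 // => i _; rewrite (sumr_sqr_eq0 A0) mul0r.
  by rewrite expr0n /= mulr_ge0 ?sumr_sqr_ge0.
have A_gt0 : 0 < A by rewrite lt_def A_neq0 sumr_sqr_ge0.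
have expand : \sum_i (A * G i - C * F i) ^+ 2 = A * (A * \sum_i G i ^+ 2 - C ^+ 2).
  rewrite (eq_bigr (fun i => A ^+ 2 * G i ^+ 2 - 2 * A * C * (F i * G i) + C ^+ 2 * F i ^+ 2)).
    by rewrite big_split sumrB /= -!mulr_sumr -/A -/C; ring.
  by move=> i _; ring.
have := sumr_sqr_ge0 (fun i => A * G i - C * F i).
by rewrite expand pmulr_rge0 // subr_ge0.
Qed.

Lemma vnorm_ge0 v : 0 <= vnorm v.
Proof. exact: sqrtr_ge0. Qed.

Lemma vnorm_sqr v : vnorm v ^+ 2 = \sum_i v i 0 ^+ 2.
Proof. by rewrite /vnorm sqr_sqrtr // sumr_sqr_ge0. Qed.

Lemma vnorm0 : vnorm (0 : 'cV[R]_n) = 0.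
Proof. by rewrite /vnorm big1 ?sqrtr0 // => i _; rewrite mxE expr0n. Qed.

Lemma vnorm_eq0 v : vnorm v = 0 -> v = 0.
Proof.
move=> v0; have /sumr_sqr_eq0 vi0 : \sum_i v i 0 ^+ 2 = 0.
  by rewrite -vnorm_sqr v0 expr0n.
by apply/matrixP => i j; rewrite ord1 mxE vi0.
Qed.

Lemma vnormZ (a : R) v : vnorm (a *: v) = `|a| * vnorm v.
Proof.
rewrite /vnorm (eq_bigr (fun i => a ^+ 2 * v i 0 ^+ 2)); last first.
  by move=> i _; rewrite mxE exprMn.
by rewrite -mulr_sumr sqrtrM ?sqr_ge0 // sqrtr_sqr.
Qed.

Lemma vnorm_le_sqr v (c : R) : 0 <= c -> vnorm v ^+ 2 <= c ^+ 2 -> vnorm v <= c.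
Proof. by move=> c0; rewrite ler_sqr ?nnegrE ?vnorm_ge0. Qed.

Lemma vnormD_le u w : vnorm (u + w) <= vnorm u + vnorm w.
Proof.
apply: vnorm_le_sqr; first by rewrite addr_ge0 ?vnorm_ge0.
set C := \sum_i u i 0 * w i 0.
have C_le : C <= vnorm u * vnorm w.
  have := cauchy_schwarz_sum (fun i => u i 0) (fun i => w i 0).
  rewrite -!vnorm_sqr -/C -exprMn -real_normK ?num_real // => CS.
  apply: le_trans (real_ler_norm (num_real C)) _.
  by rewrite -ler_sqr ?nnegrE ?mulr_ge0 ?vnorm_ge0.
have -> : vnorm (u + w) ^+ 2 = vnorm u ^+ 2 + 2 * C + vnorm w ^+ 2.
  rewrite !vnorm_sqr /C mulr_sumr -!big_split /=.
  by apply: eq_bigr => i _; rewrite mxE; ring.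
rewrite sqrrD; lra.
Qed.

Lemma vnorm_mulmx_sqr_le (A : 'M[R]_n) v :
  vnorm (A *m v) ^+ 2 <= (\sum_i \sum_k A i k ^+ 2) * vnorm v ^+ 2.
Proof.
rewrite vnorm_sqr mulr_suml; apply: ler_sum => i _.
by rewrite mxE vnorm_sqr; exact: cauchy_schwarz_sum.
Qed.

Local Open Scope classical_set_scope.

Lemma specnorm_has_sup (A : 'M[R]_n) :
  has_sup [set vnorm (A *m v) | v in [set v : 'cV[R]_n | vnorm v <= 1]].
Proof.
split; first by exists (vnorm (A *m 0)), 0; rewrite //= vnorm0.
set frob := \sum_i \sum_k A i k ^+ 2.
have frob_ge0 : 0 <= frob by apply: sumr_ge0 => i _; exact: sumr_sqr_ge0.
exists (Num.sqrt frob) => _ [v /= v_le1 <-].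
apply: vnorm_le_sqr; rewrite ?sqrtr_ge0 // [leRHS]sqr_sqrtr //.
apply: le_trans (vnorm_mulmx_sqr_le A v) _.
by rewrite ler_piMr // expr_le1 ?vnorm_ge0.
Qed.

Lemma specnorm_mulmx_le (A : 'M[R]_n) v : vnorm (A *m v) <= specnorm A * vnorm v.
Proof.
have [/vnorm_eq0 -> | v_neq0] := eqVneq (vnorm v) 0.
  by rewrite mulmx0 vnorm0 mulr0.
have [w w1 ->] : exists2 w, vnorm w = 1 & v = vnorm v *: w.
  exists ((vnorm v)^-1 *: v); last by rewrite scalerA mulfV // scale1r.
  by rewrite vnormZ ger0_norm ?invr_ge0 ?vnorm_ge0 // mulVf.
have Aw_le : vnorm (A *m w) <= specnorm A.
  by apply: (sup_upper_bound (specnorm_has_sup A)); exists w; rewrite //= w1.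
rewrite -scalemxAr !vnormZ w1 mulr1 ger0_norm ?vnorm_ge0 // mulrC.
by rewrite ler_wpM2r ?vnorm_ge0.
Qed.

Lemma specnorm_mulmx_le_bound (A : 'M[R]_n) (c : R) v :
  specnorm A <= c -> vnorm (A *m v) <= c * vnorm v.
Proof.
by move=> A_le; apply: le_trans (specnorm_mulmx_le A v) _; rewrite ler_wpM2r ?vnorm_ge0.
Qed.

End EuclideanNorm.

Section NonexpansiveMap.
Variables (R : realType) (n : nat) (rho : R -> R).
Hypothesis rho_nonexpansive : forall a b, `|rho a - rho b| <= `|a - b|.

Lemma vnorm_map_mxB_le (u w : 'cV[R]_n) :
  vnorm (map_mx rho u - map_mx rho w) <= vnorm (u - w).
Proof.
rewrite /vnorm ler_sqrt ?sumr_sqr_ge0 //; apply: ler_sum => i _; rewrite !mxE.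
rewrite -(real_normK (num_real (rho _ - _))) -(real_normK (num_real (u i 0 - _))).
by rewrite ler_sqr ?nnegrE.
Qed.

Hypothesis rho0 : rho 0 = 0.

Lemma vnorm_map_mx_le (u : 'cV[R]_n) : vnorm (map_mx rho u) <= vnorm u.
Proof.
have map0 : map_mx rho (0 : 'cV[R]_n) = 0 by apply/matrixP => i j; rewrite !mxE rho0.
by have := vnorm_map_mxB_le u 0; rewrite map0 !subr0.
Qed.

End NonexpansiveMap.

Section ScatteringStability.
Variables (R : realType) (n J : nat) (H Hh : 'I_J -> 'M[R]_n) (rho : R -> R).
Variables (Delta B : R).
Hypothesis rho_nonexpansive : forall a b, `|rho a - rho b| <= `|a - b|.
Hypothesis rho0 : rho 0 = 0.
Hypothesis Delta_ge0 : 0 <= Delta.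
Hypothesis B_ge0 : 0 <= B.
Hypothesis H_le : forall j, specnorm (H j) <= B.
Hypothesis Hh_le : forall j, specnorm (Hh j) <= B.
Hypothesis HhB_le : forall j, specnorm (Hh j - H j) <= Delta.

Lemma scat_norm_le (x : 'cV[R]_n) (js : seq 'I_J) :
  vnorm (scat H rho x js) <= B ^+ size js * vnorm x.
Proof.
elim: js => [|j js IH] /=; first by rewrite expr0 mul1r.
apply: le_trans (vnorm_map_mx_le rho_nonexpansive rho0 _) _.
apply: le_trans (specnorm_mulmx_le_bound _ (H_le j)) _.
by rewrite exprS -mulrA ler_wpM2l.
Qed.

Lemma scat_layer_diff_le j (uh u : 'cV[R]_n) :
  vnorm (map_mx rho (Hh j *m uh) - map_mx rho (H j *m u))
    <= B * vnorm (uh - u) + Delta * vnorm u.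
Proof.
apply: le_trans (vnorm_map_mxB_le rho_nonexpansive _ _) _.
have -> : Hh j *m uh - H j *m u = Hh j *m (uh - u) + (Hh j - H j) *m u.
  by rewrite mulmxBr mulmxBl addrA subrK.
apply: le_trans (vnormD_le _ _) _.
by rewrite lerD // specnorm_mulmx_le_bound.
Qed.

Lemma scat_diff_le (x : 'cV[R]_n) (js : seq 'I_J) :
  vnorm (scat Hh rho x js - scat H rho x js)
    <= (size js)%:R * Delta * B ^+ (size js).-1 * vnorm x.
Proof.
elim: js => [|j js IH] /=; first by rewrite subrr vnorm0 !mul0r.
apply: le_trans (scat_layer_diff_le _ _ _) _.
set l := size js in IH *.
have B_IH : B * (l%:R * Delta * B ^+ l.-1 * vnorm x) = l%:R * Delta * B ^+ l * vnorm x.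
  transitivity (B * (l%:R * B ^+ l.-1) * (Delta * vnorm x)); first by ring.
  by rewrite mulr_natl_exprpred; ring.
have := ler_wpM2l B_ge0 IH; rewrite B_IH.
have := ler_wpM2l Delta_ge0 (scat_norm_le x js).
rewrite -natr1; lra.
Qed.

End ScatteringStability.

Theorem lemma3 (R : realType) (N J : nat)
  (T Th V Vh : 'M[R]_N) (lam lamh : 'rV[R]_N)
  (h : 'I_J -> R -> R) (rho : R -> R) (Delta B : R) (x : 'cV[R]_N)
  (js : seq 'I_J) :
  T^T = T -> Th^T = Th ->
  V *m V^T = 1%:M -> V^T *m V = 1%:M -> T = V *m diag_mx lam *m V^T ->
  Vh *m Vh^T = 1%:M -> Vh^T *m Vh = 1%:M -> Th = Vh *m diag_mx lamh *m Vh^T ->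
  (forall a b, `|rho a - rho b| <= `|a - b|) -> rho 0 = 0 ->
  0 <= Delta ->
  (forall j, specnorm (spec_fun Vh lamh (h j) - spec_fun V lam (h j)) <= Delta) ->
  0 < B ->
  (forall j, specnorm (spec_fun V lam (h j)) <= B) ->
  (forall j, specnorm (spec_fun Vh lamh (h j)) <= B) ->
  (1 <= size js)%N ->
  vnorm (scat (fun j => spec_fun Vh lamh (h j)) rho x js
         - scat (fun j => spec_fun V lam (h j)) rho x js)
  <= (size js)%:R * Delta * B ^+ (size js).-1 * vnorm x.
Proof.
move=> _ _ _ _ _ _ _ _ rho_nonexp rho0 Delta_ge0 HhB_le B_gt0 H_le Hh_le _.
exact: (scat_diff_le rho_nonexp rho0 Delta_ge0 (ltW B_gt0) H_le Hh_le HhB_le x js).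
Qed.
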